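(* Let $M$ be a nonsingular real symmetric $n \times n$ matrix and let $\alpha \subseteq \{1,\dots,n\}$ with $|\alpha| \geq 2$ such that every subset $\gamma \subseteq \alpha$ with $|\gamma|=2$ is a P-set of $M$. Then $\alpha$ is a P-set of $M$.
   Context: All matrices are real. For an $n\times n$ matrix $A$ and $\alpha \subseteq \{1,\dots,n\}$, $A(\alpha)$ denotes the principal submatrix obtained by deleting the rows and columns indexed by $\alpha$, and $\nu(A)$ denotes the nullity of $A$. A set $\alpha$ is a P-set of $A$ if $\nu(A(\alpha)) = \nu(A) + |\alpha|$. *)

(* Real matrices are stated over an arbitrary real closed field
   (rcfType); by Tarski transfer this is equivalent to the statement over R. *)
From HB Require Import structures.
From mathcomp Require Import all_boot all_order all_algebra.
Set Implicit Arguments. Unset Strict Implicit. Unset Printing Implicit Defensive.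
Import Order.TTheory GRing.Theory Num.Theory.
Local Open Scope ring_scope.

Definition nullity (R : fieldType) (m : nat) (A : 'M[R]_m) : nat :=
  (m - \rank A)%N.

(* A(alpha): principal submatrix obtained by deleting the rows and columns
   indexed by alpha; rows/columns kept in increasing order (enum order). *)
Definition pdel (R : fieldType) (n : nat) (A : 'M[R]_n) (a : {set 'I_n})
  : 'M[R]_#|~: a| :=
  \matrix_(i, j) A (enum_val i) (enum_val j).

Definition Pset (R : fieldType) (n : nat) (A : 'M[R]_n) (a : {set 'I_n}) : Prop :=
  nullity (pdel A a) = (nullity A + #|a|)%N.

From HB Require Import structures.
From mathcomp Require Import all_boot all_order all_algebra zify.
Import GRing.Theory Num.Theory.
Local Open Scope ring_scope.
Set Implicit Arguments.
Unset Strict Implicit.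
Unset Printing Implicit Defensive.

(* For nonsingular M, complementary nullity (Jacobi) gives
   nu(M(alpha)) = nu(M^-1[alpha]), where M^-1[alpha] is the principal submatrix
   of M^-1 on alpha, of order |alpha|.  Hence alpha is a P-set of M exactly when
   M^-1[alpha] = 0, i.e. when every entry of M^-1 indexed by alpha vanishes.  Any
   two (possibly equal) indices of alpha lie in a 2-subset of alpha, so the
   hypothesis on pairs makes all these entries vanish. *)

Section ComplementaryNullity.

Variable R : fieldType.

Lemma mulmx_split n p q (E : 'M[R]_(p, n)) (F : 'M[R]_(q, n)) k l
    (U : 'M[R]_(k, n)) (V : 'M[R]_(n, l)) :
  E^T *m E + F^T *m F = 1%:M ->
  U *m E^T *m (E *m V) + U *m F^T *m (F *m V) = U *m V.
Proof.
by move=> EF1; rewrite !mulmxA -mulmxDl -!(mulmxA U) -mulmxDr EF1 mulmx1.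
Qed.

(* Right multiplication by P maps the left kernel of S into that of W,
   injectively since K = K P Q on it. *)
Lemma mxrank_ker_le m k (S X : 'M[R]_m) (Y : 'M[R]_(m, k)) (W : 'M[R]_k)
    (P : 'M[R]_(m, k)) (Q : 'M[R]_(k, m)) :
  S *m X + P *m Q = 1%:M -> S *m Y + P *m W = 0 ->
  (\rank (kermx S) <= \rank (kermx W))%N.
Proof.
move=> SXPQ SYPW; set K := kermx S.
have KS : K *m S = 0 by apply: mulmx_ker.
have KP_ker : (K *m P <= kermx W)%MS.
  apply/sub_kermxP; rewrite -mulmxA.
  have -> : P *m W = - (S *m Y) by apply/eqP; rewrite -addr_eq0 addrC SYPW.
  by rewrite mulmxN mulmxA KS mul0mx oppr0.
have K_KPQ : K = K *m P *m Q.
  by rewrite -mulmxA -[LHS]mulmx1 -SXPQ mulmxDr mulmxA KS mul0mx add0r.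
by apply: leq_trans (mxrankS KP_ker); rewrite {1}K_KPQ mxrankM_maxl.
Qed.

(* The rows of E and F form an orthonormal basis; [E *m M *m E^T] and
   [F *m B *m F^T] are complementary diagonal blocks of a matrix and its
   inverse in that basis. *)
Lemma nullity_compl_block n p q (M B : 'M[R]_n)
    (E : 'M[R]_(p, n)) (F : 'M[R]_(q, n)) :
  M *m B = 1%:M -> B *m M = 1%:M -> E^T *m E + F^T *m F = 1%:M ->
  E *m E^T = 1%:M -> F *m F^T = 1%:M -> E *m F^T = 0 -> F *m E^T = 0 ->
  nullity (E *m M *m E^T) = nullity (F *m B *m F^T).
Proof.
move=> MB BM EF1 EE FF EF FE.
have block (N N' : 'M[R]_n) k l (U : 'M_(k, n)) (V : 'M_(l, n)) :
    N *m N' = 1%:M ->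
    U *m N *m E^T *m (E *m N' *m V^T) + U *m N *m F^T *m (F *m N' *m V^T)
    = U *m V^T.
  move=> NN'; rewrite -!(mulmxA E) -!(mulmxA F) mulmx_split //.
  by rewrite -!mulmxA (mulmxA N) NN' mul1mx.
have invEE := block _ _ _ _ E E MB; have invEF := block _ _ _ _ E F MB.
have invFE := block _ _ _ _ F E BM; have invFF := block _ _ _ _ F F BM.
rewrite EE in invEE; rewrite EF in invEF; rewrite FE in invFE.
rewrite FF in invFF; rewrite addrC in invFE; rewrite addrC in invFF.
rewrite /nullity -!mxrank_ker; apply/eqP; rewrite eqn_leq.
by rewrite (mxrank_ker_le invEE invEF) (mxrank_ker_le invFF invFE).
Qed.

Variable n : nat.
Implicit Types (a : {set 'I_n}) (M : 'M[R]_n).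

Definition selmx a : 'M[R]_(#|a|, n) := \matrix_(i, j) (enum_val i == j)%:R.

Definition psubmx M a : 'M[R]_#|a| := \matrix_(i, j) M (enum_val i) (enum_val j).

Lemma mul_selmx p a (N : 'M[R]_(n, p)) :
  selmx a *m N = \matrix_(i, j) N (enum_val i) j.
Proof.
apply/matrixP => i j; rewrite !mxE (bigD1 (enum_val i)) //= big1 => [|l Hl].
  by rewrite mxE eqxx mul1r addr0.
by rewrite mxE eq_sym (negbTE Hl) mul0r.
Qed.

Lemma mulmx_selmxT p a (N : 'M[R]_(p, n)) :
  N *m (selmx a)^T = \matrix_(i, j) N i (enum_val j).
Proof.
apply/matrixP => i j; rewrite !mxE (bigD1 (enum_val j)) //= big1 => [|l Hl].
  by rewrite !mxE eqxx mulr1 addr0.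
by rewrite !mxE eq_sym (negbTE Hl) mulr0.
Qed.

Lemma psubmxE M a : psubmx M a = selmx a *m M *m (selmx a)^T.
Proof. by rewrite mulmx_selmxT mul_selmx; apply/matrixP => i j; rewrite !mxE. Qed.

Lemma selmxT_selmxE a i j :
  ((selmx a)^T *m selmx a) i j = ((i \in a) && (i == j))%:R.
Proof.
rewrite mxE; case: (boolP (i \in a)) => ia /=.
  rewrite (bigD1 (enum_rank_in ia i)) //= big1 => [|l Hl].
    by rewrite !mxE enum_rankK_in // eqxx mul1r addr0.
  rewrite !mxE; case: eqP => [li|]; last by rewrite mul0r.
  by case/eqP: Hl; apply: enum_val_inj; rewrite li enum_rankK_in.
rewrite big1 // => l _; rewrite !mxE; case: eqP => [li|]; last by rewrite mul0r.
by move: (enum_valP l); rewrite li (negbTE ia).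
Qed.

Lemma selmxT_selmx_compl a :
  (selmx (~: a))^T *m selmx (~: a) + (selmx a)^T *m selmx a = 1%:M.
Proof.
apply/matrixP => i j; rewrite [LHS]mxE !selmxT_selmxE in_setC mxE.
by case: (i \in a); case: (i == j); rewrite /= ?add0r ?addr0.
Qed.

Lemma selmx_selmxT a : selmx a *m (selmx a)^T = 1%:M.
Proof.
by apply/matrixP => i j; rewrite mulmx_selmxT !mxE (inj_eq enum_val_inj).
Qed.

Lemma selmx_selmxT_disjoint (a b : {set 'I_n}) :
  [disjoint a & b] -> selmx a *m (selmx b)^T = 0.
Proof.
move=> ab; apply/matrixP => i j; rewrite mulmx_selmxT !mxE.
case: eqP => // ij; have := disjointFr ab (enum_valP i).
by rewrite ij enum_valP.
Qed.

Lemma nullity_pdel_unitmx M a : M \in unitmx ->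
  nullity (pdel M a) = nullity (psubmx (invmx M) a).
Proof.
move=> Mu; have -> : pdel M a = psubmx M (~: a) by [].
rewrite !psubmxE; apply: nullity_compl_block;
  rewrite ?mulmxV ?mulVmx ?selmxT_selmx_compl ?selmx_selmxT //;
  by apply: selmx_selmxT_disjoint; rewrite disjoints_subset ?setCK.
Qed.

Lemma Pset_unitmxP M a : M \in unitmx ->
  Pset M a <-> psubmx (invmx M) a = 0.
Proof.
move=> Mu; rewrite /Pset nullity_pdel_unitmx // {2}/nullity mxrank_unit //.
rewrite subnn add0n /nullity; split => [r0 | ->]; last by rewrite mxrank0 subn0.
apply/eqP; rewrite -mxrank_eq0.
by have := rank_leq_row (psubmx (invmx M) a); lia.
Qed.

Lemma psubmx_eq0P M a :
  reflect {in a &, forall i j, M i j = 0} (psubmx M a == 0).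
Proof.
apply: (iffP eqP) => [M0 i j ia ja | M0].
  move/matrixP/(_ (enum_rank_in ia i) (enum_rank_in ia j)): M0.
  by rewrite !mxE !enum_rankK_in.
by apply/matrixP => i j; rewrite !mxE M0 ?enum_valP.
Qed.

End ComplementaryNullity.

Lemma pair_subset n (a : {set 'I_n}) i j : (2 <= #|a|)%N -> i \in a -> j \in a ->
  exists g : {set 'I_n}, [/\ g \subset a, #|g| = 2%N, i \in g & j \in g].
Proof.
move=> a2 ia ja; have [<-|ij] := eqVneq i j.
  have : (0 < #|a :\ i|)%N by move: a2; rewrite (cardsD1 i a) ia; lia.
  case/card_gt0P => l; rewrite !inE => /andP [li la].
  exists [set i; l]; split; rewrite ?set21 //.
    by apply/subsetP => x; rewrite !inE => /orP [] /eqP ->.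
  by rewrite cards2 eq_sym li.
exists [set i; j]; split; rewrite ?set21 ?set22 //.
  by apply/subsetP => x; rewrite !inE => /orP [] /eqP ->.
by rewrite cards2 ij.
Qed.

Theorem theorem2p4 (R : rcfType) (n : nat) (M : 'M[R]_n) (a : {set 'I_n}) :
  M^T = M -> M \in unitmx -> (2 <= #|a|)%N ->
  (forall g : {set 'I_n}, g \subset a -> #|g| = 2%N -> Pset M g) ->
  Pset M a.
Proof.
move=> _ Mu a2 pairsP; apply/Pset_unitmxP/eqP/psubmx_eq0P => // i j ia ja.
have [g [ga g2 ig jg]] := pair_subset a2 ia ja.
by move/(Pset_unitmxP _ Mu)/eqP/psubmx_eq0P: (pairsP g ga g2); apply.
Qed.
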